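(* Let $l\ge2$ and $1\le i\le l-1$ be integers, and let $\beta_1,\dots,\beta_i,\eta$ be real numbers in $(0,1)$ with $\eta=1-(\beta_1+\cdots+\beta_i)$; write $\overline{\boldsymbol\beta}=(\beta_1,\dots,\beta_i,\eta)$. Then there exist constants $C,N$ depending only on $\overline{\boldsymbol\beta}$ such that for all integers $n\ge N$ and all integers $d>1$, $$\frac{1}{d^{l-1}}\sum_{1\le h_1,\dots,h_i\le d-1}\Big|\beta_1 e\big(\tfrac{h_1}{d}\big)+\cdots+\beta_i e\big(\tfrac{h_i}{d}\big)+\eta\Big|^n\le C\,\frac{\log n}{\sqrt n},$$ where $e(x)=e^{2\pi i x}$. *)

From HB Require Import structures.
From mathcomp Require Import all_boot all_order all_algebra.
From mathcomp Require Import all_classical all_reals all_analysis.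
Set Implicit Arguments. Unset Strict Implicit. Unset Printing Implicit Defensive.
Import Order.TTheory GRing.Theory Num.Theory.
Local Open Scope ring_scope.

(* |beta_1 e(h_1/d) + ... + beta_i e(h_i/d) + eta|, with e(x) = exp(2 pi i x),
   written out as the modulus sqrt(Re^2 + Im^2) of the complex number. *)
Definition expsum_mod (R : realType) (i : nat) (beta : 'I_i -> R) (eta : R)
    (d : nat) (h : 'I_i -> nat) : R :=
  Num.sqrt ((\sum_(j < i) beta j * cos (2 * pi * (h j)%:R / d%:R) + eta) ^+ 2
          + (\sum_(j < i) beta j * sin (2 * pi * (h j)%:R / d%:R)) ^+ 2).

From HB Require Import structures.
From mathcomp Require Import all_boot all_order all_algebra.
From mathcomp Require Import all_classical all_reals all_analysis.
From mathcomp Require Import ring lra.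
Set Implicit Arguments. Unset Strict Implicit. Unset Printing Implicit Defensive.
Import Order.TTheory GRing.Theory Num.Theory.
Local Open Scope ring_scope.

(* Only the first frequency matters.  By the triangle inequality and
   |b e(t) + eta|^2 = (b + eta)^2 - 2 b eta (1 - cos(2 pi t)), the modulus of
   beta_1 e(h_1/d) + ... + beta_i e(h_i/d) + eta is at most
   1 - kappa (1 - cos(2 pi h_1/d)) with kappa = beta_1 eta / 2, so its n-th power
   is at most exp(-n kappa (1 - cos(2 pi h_1/d))).  Summing over h_2, ..., h_i
   costs a factor d^(i-1).  In the remaining sum over h_1, the h_1 with h_1/d at
   distance at least delta from the integers contribute exp(-n kappa delta^2/2)
   each, because 1 - cos(2 pi x) >= x^2/2 on [0, 1/2], and at most 2 delta d
   values of h_1 are closer.  With delta = log n / sqrt n both contributions are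
   O(log n / sqrt n) once kappa log n >= 2. *)

Section ExponentialSums.
Variable R : realType.
Implicit Types x y t : R.

Lemma ge0_derive_le (f df : R -> R) (a b : R) : a <= b ->
  (forall x, is_derive x (1 : R) f (df x)) ->
  (forall x, a <= x <= b -> 0 <= df x) -> f a <= f b.
Proof.
move=> ab fD df_ge0.
have [|c] := MVT_segment ab (fun x _ => fD x).
  by apply: derivable_within_continuous => x _; exact: ex_derive.
rewrite in_itv /= => cab /eqP; rewrite subr_eq => /eqP ->.
by rewrite lerDr mulr_ge0 ?df_ge0 ?subr_ge0.
Qed.

Lemma sin_le_id y : 0 <= y -> sin y <= y.
Proof.
move=> y0; have dF x : is_derive x (1 : R) (fun x => x - sin x) (1 - cos x).
  exact: is_derive_eq.
have /= := ge0_derive_le y0 dF; rewrite sin0 subrr subr_ge0; apply=> x _.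
by rewrite subr_ge0 cos_le1.
Qed.

Lemma cos_ge_taylor y : 0 <= y -> 1 - y ^+ 2 / 2 <= cos y.
Proof.
move=> y0; have dF x : is_derive x (1 : R) (fun x => cos x + x ^+ 2 / 2) (x - sin x).
  by apply: is_derive_eq; rewrite !scaler0 /GRing.scale /=; field.
have /= := ge0_derive_le y0 dF; rewrite cos0 expr0n mul0r addr0 lerBlDr.
by apply=> x /andP[x0 _]; rewrite subr_ge0 sin_le_id.
Qed.

Lemma sin_ge_taylor y : 0 <= y -> y - y ^+ 3 / 6 <= sin y.
Proof.
move=> y0.
have dF x : is_derive x (1 : R) (fun x => sin x - x + x ^+ 3 / 6) (cos x - 1 + x ^+ 2 / 2).
  by apply: is_derive_eq; rewrite !scaler0 /GRing.scale /=; field.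
have dF_ge0 x : 0 <= x <= y -> 0 <= cos x - 1 + x ^+ 2 / 2.
  by case/andP=> x0 _; have := cos_ge_taylor x0; lra.
have /= := ge0_derive_le y0 dF dF_ge0; rewrite sin0 subrr expr0n mul0r addr0.
lra.
Qed.

Lemma one_sub_cos2pi_ge_sqr x : 0 <= x <= 1 / 2 -> x ^+ 2 / 2 <= 1 - cos (2 * pi * x).
Proof.
case/andP=> x0 x_le; set z := pi * x.
have pi_ge2 := pi_ge2 R; have pi_le4 : pi <= 4 :> R by have := @pihalf_lt2 R; lra.
have z0 : 0 <= z by rewrite mulr_ge0 // pi_ge0.
have z_le2 : z <= 2 by rewrite /z; nra.
have x_le_z : 2 * x <= z by rewrite /z; nra.
have sin_z : 2 * x / 3 <= sin z.
  have : 0 <= z * (4 - z ^+ 2) by apply: mulr_ge0; nra.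
  by have := sin_ge_taylor z0; nra.
rewrite (_ : 2 * pi * x = z *+ 2); last by rewrite /z mulr2n; ring.
rewrite cos_mulr2n cos2sin2; nra.
Qed.

Lemma one_sub_cos2pi_ge_dist (d x : R) : 0 <= d -> d <= x -> d <= 1 - x ->
  d ^+ 2 / 2 <= 1 - cos (2 * pi * x).
Proof.
move=> d0; wlog x_le : x / x <= 1 / 2 => [sym dx dx'|dx _].
  have [x_le|x_gt] := leP x (1 / 2); first exact: sym.
  have -> : cos (2 * pi * x) = cos (2 * pi * (1 - x)).
    rewrite mulrBr mulr1 cosB (_ : 2 * pi = pi *+ 2) ?mulr_natl //.
    by rewrite cos2pi sin2pi mul1r mul0r addr0.
  by apply: sym => //; lra.
by apply: le_trans (one_sub_cos2pi_ge_sqr _); nra.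
Qed.

Lemma expR_one_sub_cos2pi_le t (d x : R) : 0 <= t -> 0 <= d ->
  expR (- (t * (1 - cos (2 * pi * x)))) <=
  expR (- (t * (d ^+ 2 / 2))) + (x < d)%R%:R + (1 - x < d)%R%:R.
Proof.
move=> t0 d0.
have e_le1 : expR (- (t * (1 - cos (2 * pi * x)))) <= 1.
  by rewrite expR_le1 oppr_le0 mulr_ge0 // subr_ge0 cos_le1.
have := expR_ge0 (- (t * (d ^+ 2 / 2))).
case: ltP => [_|dx]; case: ltP => [_|dx'] /=; rewrite ?mulr1n ?addr0; try lra.
by rewrite ler_expR lerN2 ler_wpM2l // one_sub_cos2pi_ge_dist.
Qed.

Lemma sum_natS_lt_indicator y (m : nat) : 0 <= y ->
  \sum_(a < m) ((a.+1)%:R < y)%R%:R <= y.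
Proof.
move=> y0; elim: m => [|m IHm]; first by rewrite big_ord0.
rewrite big_ord_recr /=; case: ltP => [my|_]; last by rewrite addr0.
have : \sum_(a < m) ((a.+1)%:R < y)%R%:R <= m%:R :> R.
  have -> : m%:R = \sum_(a < m) 1 :> R by rewrite sumr_const card_ord.
  by apply: ler_sum => a _; case: (_ < _); rewrite ?ler01 ?lexx.
by rewrite -natr1 in my; rewrite mulr1n; lra.
Qed.

Lemma sum_subn_lt_indicator y (m : nat) : 0 <= y ->
  \sum_(a < m) ((m - a)%:R < y)%R%:R <= y.
Proof.
move=> y0; rewrite (reindex_inj rev_ord_inj) /=.
under eq_bigr => a _ do rewrite subKn ?ltn_ord //.
exact: sum_natS_lt_indicator.
Qed.

Lemma sum_expR_one_sub_cos2pi_le (m : nat) t (d : R) : 0 <= t -> 0 <= d ->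
  \sum_(a < m) expR (- (t * (1 - cos (2 * pi * (a.+1)%:R / (m.+1)%:R)))) <=
  (m.+1)%:R * (expR (- (t * (d ^+ 2 / 2))) + 2 * d).
Proof.
move=> t0 d0; set D : R := (m.+1)%:R; set eps := expR _.
have D_gt0 : 0 < D by rewrite ltr0Sn.
have term_le (a : 'I_m) : expR (- (t * (1 - cos (2 * pi * (a.+1)%:R / D)))) <=
    eps + ((a.+1)%:R < d * D)%R%:R + ((m - a)%:R < d * D)%R%:R.
  have -> : (m - a)%:R = (1 - (a.+1)%:R / D) * D :> R.
    rewrite natrB; last exact: ltnW.
    by rewrite /D -[(m.+1)%:R]natr1 -[(a.+1)%:R]natr1; field; rewrite natr1 pnatr_eq0.
  rewrite ltr_pM2r // -ltr_pdivrMr // -mulrA.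
  exact: expR_one_sub_cos2pi_le.
apply: le_trans (ler_sum _ (fun a _ => term_le a)) _.
rewrite !big_split /= sumr_const card_ord -[eps *+ m]mulr_natr.
have dD0 : 0 <= d * D by rewrite mulr_ge0 // ltW.
have := sum_natS_lt_indicator m dD0; have := sum_subn_lt_indicator m dD0.
have : eps * m%:R <= eps * D by rewrite ler_wpM2l ?expR_ge0 // ler_nat.
lra.
Qed.

Lemma sum_ffun_eval (I T : finType) (i0 : I) (g : T -> R) :
  \sum_(h : {ffun I -> T}) g (h i0) = (\sum_a g a) * #|T|%:R ^+ #|I|.-1.
Proof.
pose F i a := if i == i0 then g a else 1.
have gE (h : {ffun I -> T}) : g (h i0) = \prod_i F i (h i).
  by rewrite (bigD1 i0) //= /F eqxx big1 ?mulr1 // => i /negbTE ->.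
under eq_bigr do rewrite gE.
rewrite -bigA_distr_bigA (bigD1 i0) //= /F eqxx; congr (_ * _).
under eq_bigr => i /negbTE -> do rewrite sumr_const.
by rewrite prodr_const cardC1.
Qed.

Definition plane_norm x y : R := Num.sqrt (x ^+ 2 + y ^+ 2).

Lemma plane_normD (x1 y1 x2 y2 : R) :
  plane_norm (x1 + x2) (y1 + y2) <= plane_norm x1 y1 + plane_norm x2 y2.
Proof.
rewrite /plane_norm; set u := Num.sqrt (x1 ^+ 2 + _); set v := Num.sqrt (x2 ^+ 2 + _).
have [u0 v0] : 0 <= u /\ 0 <= v by split; apply: sqrtr_ge0.
have u2 : u ^+ 2 = x1 ^+ 2 + y1 ^+ 2 by rewrite sqr_sqrtr // addr_ge0 // sqr_ge0.
have v2 : v ^+ 2 = x2 ^+ 2 + y2 ^+ 2 by rewrite sqr_sqrtr // addr_ge0 // sqr_ge0.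
have cauchy_schwarz : x1 * x2 + y1 * y2 <= u * v.
  have : (x1 * x2 + y1 * y2) ^+ 2 <= (u * v) ^+ 2.
    by rewrite exprMn u2 v2; have := sqr_ge0 (x1 * y2 - y1 * x2); nra.
  by have := mulr_ge0 u0 v0; nra.
rewrite -[u + v]ger0_norm ?addr_ge0 // -sqrtr_sqr ler_sqrt ?sqr_ge0 //; nra.
Qed.

Lemma plane_norm_sum (I : Type) (r : seq I) (x y : I -> R) :
  plane_norm (\sum_(i <- r) x i) (\sum_(i <- r) y i) <= \sum_(i <- r) plane_norm (x i) (y i).
Proof.
apply: (big_rec3 (fun u v w => plane_norm u v <= w)).
  by rewrite /plane_norm expr0n /= addr0 sqrtr0.
by move=> i u v w _ uvw; apply: le_trans (plane_normD _ _ _ _) (lerD _ uvw).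
Qed.

Lemma plane_norm_polar (r t : R) : plane_norm (r * cos t) (r * sin t) = `|r|.
Proof. by rewrite /plane_norm !exprMn -mulrDr cos2Dsin2 mulr1 sqrtr_sqr. Qed.

Lemma plane_norm_cosD_le (b e t : R) : 0 <= b -> 0 <= e -> b + e <= 1 ->
  plane_norm (b * cos t + e) (b * sin t) <= b + e - b * e / 2 * (1 - cos t).
Proof.
move=> b0 e0 be1; have c_le1 := cos_le1 t; have c_geN1 := cos_geN1 t.
have u0 : 0 <= b * e * (1 - cos t) by rewrite !mulr_ge0 // subr_ge0.
have rhs0 : 0 <= b + e - b * e / 2 * (1 - cos t).
  have : b * e * (1 - cos t) <= b * e * 2 by rewrite ler_wpM2l ?mulr_ge0 //; lra.
  have : b * e <= b by rewrite ler_piMr //; lra.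
  lra.
rewrite /plane_norm -[X in _ <= X]ger0_norm // -sqrtr_sqr ler_sqrt ?sqr_ge0 //.
rewrite exprMn sin2cos2.
have : 0 <= b * e * (1 - cos t) * (2 - b - e) by rewrite mulr_ge0 //; lra.
by have := sqr_ge0 (b * e * (1 - cos t)); nra.
Qed.

Lemma exprn_le_expR (a x : R) (n : nat) : 0 <= a -> a <= 1 - x ->
  a ^+ n <= expR (- (n%:R * x)).
Proof.
move=> a0 ax; rewrite -mulrN expRM_natl.
apply: lerXn2r; rewrite ?nnegrE ?expR_ge0 //.
by have := expR_ge1Dx (- x); lra.
Qed.

Section FirstFrequency.
Variables (k : nat) (beta : 'I_k.+1 -> R) (eta : R).
Hypotheses (beta_ge0 : forall j, 0 <= beta j) (eta_ge0 : 0 <= eta).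
Hypothesis eta_def : eta = 1 - \sum_j beta j.
Local Notation kappa := (beta ord0 * eta / 2).

Lemma expsum_mod_le (d : nat) (h : 'I_k.+1 -> nat) :
  expsum_mod beta eta d h <= 1 - kappa * (1 - cos (2 * pi * (h ord0)%:R / d%:R)).
Proof.
rewrite /expsum_mod -/(plane_norm _ _) !big_ord_recl.
set A := \sum_(j < k) _; set B := \sum_(j < k) _.
have tail : plane_norm A B <= \sum_(j < k) beta (lift ord0 j).
  apply: le_trans (plane_norm_sum _ _ _) _; apply: ler_sum => j _.
  by rewrite plane_norm_polar ger0_norm.
have sum1 : beta ord0 + eta + \sum_(j < k) beta (lift ord0 j) = 1.
  by rewrite eta_def big_ord_recl; ring.
have head := plane_norm_cosD_le (2 * pi * (h ord0)%:R / d%:R) (beta_ge0 ord0) eta_ge0.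
rewrite -addrA (addrC A) addrA; apply: le_trans (plane_normD _ _ _ _) _.
have : 0 <= \sum_(j < k) beta (lift ord0 j) by apply: sumr_ge0.
by move: head; lra.
Qed.

Lemma sum_expsum_mod_le (m n : nat) :
  \sum_(h : {ffun 'I_k.+1 -> 'I_m}) expsum_mod beta eta m.+1 (fun j => (h j).+1) ^+ n <=
  (\sum_(a < m) expR (- (n%:R * kappa * (1 - cos (2 * pi * (a.+1)%:R / (m.+1)%:R)))))
    * m%:R ^+ k.
Proof.
have := @sum_ffun_eval 'I_k.+1 'I_m ord0 (fun a =>
  expR (- (n%:R * kappa * (1 - cos (2 * pi * (a.+1)%:R / (m.+1)%:R))))).
rewrite !card_ord /= => <-; apply: ler_sum => h _; rewrite -mulrA.
exact: exprn_le_expR (sqrtr_ge0 _) (expsum_mod_le _ _).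
Qed.

Lemma scaled_sum_expsum_mod_le (l m n : nat) (d : R) : (k.+1 <= l.-1)%N -> 0 <= d ->
  ((m.+1)%:R ^+ l.-1)^-1 *
    \sum_(h : {ffun 'I_k.+1 -> 'I_m}) expsum_mod beta eta m.+1 (fun j => (h j).+1) ^+ n
  <= expR (- (n%:R * kappa * (d ^+ 2 / 2))) + 2 * d.
Proof.
move=> kl d0; set D : R := (m.+1)%:R; set E := expR _ + _.
have D_ge1 : 1 <= D by rewrite ler1n.
have D_gt0 : 0 < D by rewrite ltr0Sn.
have E0 : 0 <= E by rewrite addr_ge0 ?expR_ge0 ?mulr_ge0.
have kappa0 : 0 <= kappa by rewrite !mulr_ge0.
have powD : D * m%:R ^+ k <= D ^+ l.-1.
  apply: le_trans (ler_weXn2l D_ge1 kl); rewrite exprS ler_wpM2l ?(ltW D_gt0) //.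
  by rewrite lerXn2r ?nnegrE ?ler0n ?(ltW D_gt0) // ler_nat.
rewrite mulrC ler_pdivrMr ?exprn_gt0 //.
apply: le_trans (sum_expsum_mod_le m n) _.
apply: le_trans (ler_wpM2r _ (sum_expR_one_sub_cos2pi_le m _ d0)) _.
- by rewrite exprn_ge0 ?ler0n.
- by rewrite mulr_ge0 ?ler0n.
by rewrite -/D -/E mulrAC [leRHS]mulrC ler_wpM2r.
Qed.
End FirstFrequency.

Lemma ln_nat_ge (a : R) : exists N, forall n, (N <= n)%N -> a <= ln n%:R.
Proof.
exists (Num.truncn (expR a)).+1 => n Nn.
have an : expR a < n%:R by apply: lt_le_trans (truncnS_gt _) _; rewrite ler_nat.
rewrite -[a]expRK ler_ln ?posrE ?expR_gt0 ?(ltW an) //.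
exact: lt_trans (expR_gt0 a) an.
Qed.

Lemma expR_ln_sqrt_le (c x : R) : 1 <= ln x -> 2 <= c * ln x ->
  expR (- (x * c * ((ln x / Num.sqrt x) ^+ 2 / 2))) + 2 * (ln x / Num.sqrt x)
  <= 3 * ln x / Num.sqrt x.
Proof.
move=> L1 cL; have x_gt1 : 1 < x by rewrite ltNge; apply/negP => /ln_le0; lra.
have x0 : 0 < x by lra.
set L := ln x in L1 cL *; set w := (Num.sqrt x)^-1.
have w0 : 0 < w by rewrite invr_gt0 sqrtr_gt0.
have w1 : w <= 1 by rewrite invf_le1 ?sqrtr_gt0 // -sqrtr1 ler_sqrt; lra.
have xw : x * (w * w) = 1.
  by rewrite -expr2 exprVn sqr_sqrtr ?mulfV ?gt_eqF // ltW.
have E_le : expR (- (x * c * ((L * w) ^+ 2 / 2))) <= w * w.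
  have -> : w * w = expR (- L).
    by rewrite expRN lnK ?posrE //; apply: (mulfI (lt0r_neq0 x0)); rewrite xw mulfV ?lt0r_neq0.
  rewrite ler_expR lerN2 (_ : x * c * ((L * w) ^+ 2 / 2) = c * L * L / 2 * (x * (w * w))).
    by rewrite xw mulr1; nra.
  by field.
have : w * w <= w by nra.
have : w <= L * w by nra.
lra.
Qed.
End ExponentialSums.

Theorem lemma2p3 (R : realType) (i : nat) (beta : 'I_i -> R) (eta : R) :
  (1 <= i)%N ->
  (forall j, 0 < beta j < 1) -> 0 < eta < 1 ->
  eta = 1 - \sum_(j < i) beta j ->
  exists C : R, exists N : nat,
    forall (l n d : nat), (2 <= l)%N -> (i <= l.-1)%N ->
      (N <= n)%N -> (1 < d)%N ->
      (d%:R ^+ l.-1)^-1 *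
        \sum_(h : {ffun 'I_i -> 'I_(d.-1)})
          expsum_mod beta eta d (fun j => (h j).+1) ^+ n
      <= C * ln n%:R / Num.sqrt n%:R.
Proof.
case: i beta => [//|k] beta _ beta_bd /andP[eta_gt0 _] eta_def.
have beta_gt0 j : 0 < beta j by case/andP: (beta_bd j).
have beta_ge0 j : 0 <= beta j := ltW (beta_gt0 j).
set kappa := beta ord0 * eta / 2.
have kappa_gt0 : 0 < kappa by rewrite divr_gt0 // mulr_gt0.
have [N lnN] := ln_nat_ge (1 + 2 / kappa).
exists 3, N => l n [//|m] _ kl /lnN ln_ge _.
have two_le : 2 <= kappa * ln n%:R.
  have : kappa * (1 + 2 / kappa) <= kappa * ln n%:R by rewrite ler_pM2l.
  by rewrite mulrDr mulrCA mulfV ?gt_eqF // mulr1; lra.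
have ln_ge1 : 1 <= ln n%:R :> R.
  have : 0 <= 2 / kappa by rewrite divr_ge0 // ltW.
  lra.
have delta_ge0 : 0 <= ln n%:R / Num.sqrt n%:R :> R.
  by rewrite divr_ge0 ?sqrtr_ge0 // (le_trans ler01 ln_ge1).
apply: le_trans (scaled_sum_expsum_mod_le beta_ge0 (ltW eta_gt0) eta_def m n kl delta_ge0) _.
exact: expR_ln_sqrt_le ln_ge1 two_le.
Qed.
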